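(* Let $k\in\mathbb{R}_{\ge0}$, let $(x_j,y_j,z_j)$ be a triple of the classical Euclid tree and $(X_j,Y_j,Z_j)$ the corresponding triple of the $k$-generalized Euclid tree, with comparison triple $(l_j,m_j,n_j)=(X_j/x_j,Y_j/y_j,Z_j/z_j)$. For $i\in\{1,2,3\}$ let $(l_{j+1},m_{j+1},n_{j+1})$ be the comparison triple of $\mathcal{M}_i(x_j,y_j,z_j)$ and $\mathcal{M}_{i;k}(X_j,Y_j,Z_j)$. Then: (1) if $m_j<n_j$ and $i=1$: $l_{j+1}\in[m_j,n_j]\iff k\le y_j(n_j-m_j)$; (2) if $n_j<m_j$ and $i=1$: $l_{j+1}\in[n_j,m_j]\iff k\le z_j(m_j-n_j)$; (3) if $l_j<n_j$ and $i=2$: $m_{j+1}\in[l_j,n_j]\iff k\le x_j(n_j-l_j)$; (4) if $n_j<l_j$ and $i=2$: $m_{j+1}\in[n_j,l_j]\iff k\le z_j(l_j-n_j)$; (5) if $l_j<m_j$ and $i=3$: $n_{j+1}\in[l_j,m_j]\iff k\le x_j(m_j-l_j)$; (6) if $m_j<l_j$ and $i=3$: $n_{j+1}\in[m_j,l_j]\iff k\le y_j(l_j-m_j)$. Moreover, if the inequality for $k$ holds strictly, the mutated component lies in the corresponding open interval.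
   Context: For $k\in\mathbb{R}_{\ge0}$: $\mathcal{M}_{1;k}(X,Y,Z)=(k+Y+Z,Y,Z)$, $\mathcal{M}_{2;k}(X,Y,Z)=(X,k+X+Z,Z)$, $\mathcal{M}_{3;k}(X,Y,Z)=(X,Y,k+X+Y)$ on $\mathbb{R}_+^3$, and $\mathcal{M}_i=\mathcal{M}_{i;0}$. The classical Euclid tree consists of the triples obtained from a $0$-initial triple $(a,b,c)\in\mathbb{R}_+^3$ by compositions of $\mathcal{M}_i$ along finite reduced sequences (consecutive indices distinct), and the $k$-generalized Euclid tree those obtained from a $k$-initial triple $(A,B,C)\in\mathbb{R}_+^3$ ($A\ne B+C+k$, $B\ne A+C+k$, $C\ne A+B+k$) by compositions of $\mathcal{M}_{i;k}$; corresponding triples are those obtained by the same sequence of indices. *)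

From Stdlib Require Import Reals List.
Import ListNotations.
Open Scope R_scope.

Record triple := mkT { t1 : R; t2 : R; t3 : R }.

Definition positive (t : triple) : Prop := 0 < t1 t /\ 0 < t2 t /\ 0 < t3 t.

(* The generalized maps M_{i;k}; M_i = M_{i;0}. Indices other than 1,2,3 act
   trivially but never occur in reduced sequences. *)
Definition Mk (k : R) (i : nat) (t : triple) : triple :=
  match i with
  | 1%nat => mkT (k + t2 t + t3 t) (t2 t) (t3 t)
  | 2%nat => mkT (t1 t) (k + t1 t + t3 t) (t3 t)
  | 3%nat => mkT (t1 t) (t2 t) (k + t1 t + t2 t)
  | _ => t
  end.

Definition M (i : nat) (t : triple) : triple := Mk 0 i t.

Definition applyseq (k : R) (s : list nat) (t : triple) : triple :=
  fold_left (fun u i => Mk k i u) s t.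

Fixpoint reduced (s : list nat) : Prop :=
  match s with
  | [] => True
  | i :: s' =>
      (i = 1%nat \/ i = 2%nat \/ i = 3%nat) /\
      match s' with
      | [] => True
      | j :: _ => i <> j
      end /\ reduced s'
  end.

(* k-initial triple (0-initial = initial triple of the classical tree). *)
Definition k_initial (k : R) (t : triple) : Prop :=
  positive t /\
  t1 t <> t2 t + t3 t + k /\ t2 t <> t1 t + t3 t + k /\ t3 t <> t1 t + t2 t + k.

Definition comparison (t T : triple) : triple :=
  mkT (t1 T / t1 t) (t2 T / t2 t) (t3 T / t3 t).

(* After one step, the mutated comparison ratio is a mediant of the other two
   ratios, shifted by k: for i = 1 it is (k + Y + Z)/(y + z) = (k + m y + n z)/(y + z).
   With k = 0 this lies strictly between m and n; the shift k pushes it up, and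
   it stays below n exactly as long as k <= y (n - m). *)
From Pilot Require Import Defs.
From Stdlib Require Import Reals Psatz.
Open Scope R_scope.

Lemma Mk_positive k i t : 0 <= k -> Defs.positive t -> Defs.positive (Mk k i t).
Proof.
  intros hk (h1 & h2 & h3).
  unfold Defs.positive; destruct i as [|[|[|[|i]]]]; cbn; repeat split; lra.
Qed.

Lemma applyseq_positive k s t : 0 <= k -> Defs.positive t -> Defs.positive (applyseq k s t).
Proof.
  revert t; induction s as [|i s IH]; intros t hk ht; cbn; [exact ht |].
  apply IH, Mk_positive; assumption.
Qed.

Definition shifted_mediant (k p a q b : R) : R := (k + p * a + q * b) / (a + b).

Lemma shifted_mediant_comm k p a q b :
  shifted_mediant k p a q b = shifted_mediant k q b p a.
Proof. unfold shifted_mediant; f_equal; ring. Qed.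

Lemma shifted_mediant_between k p a q b :
  0 <= k -> 0 < a -> 0 < b -> p < q ->
  ((p <= shifted_mediant k p a q b <= q) <-> k <= a * (q - p)) /\
  (k < a * (q - p) -> p < shifted_mediant k p a q b < q).
Proof.
  intros hk ha hb hpq.
  assert (hv : shifted_mediant k p a q b * (a + b) = k + p * a + q * b)
    by (unfold shifted_mediant; field; lra).
  set (v := shifted_mediant k p a q b) in *; clearbody v.
  split; [split |].
  - intros [_ hvq]; nra.
  - intro hkq; split; nra.
  - intro hkq; split; nra.
Qed.

Section OneStep.

Variables (k : R) (t T : triple).
Hypothesis ht : Defs.positive t.

Let c := comparison t T.

Lemma comparison_M1 :
  t1 (comparison (M 1 t) (Mk k 1 T)) = shifted_mediant k (t2 c) (t2 t) (t3 c) (t3 t).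
Proof.
  destruct ht as (h1 & h2 & h3).
  unfold c, comparison, shifted_mediant; cbn; field; lra.
Qed.

Lemma comparison_M2 :
  t2 (comparison (M 2 t) (Mk k 2 T)) = shifted_mediant k (t1 c) (t1 t) (t3 c) (t3 t).
Proof.
  destruct ht as (h1 & h2 & h3).
  unfold c, comparison, shifted_mediant; cbn; field; lra.
Qed.

Lemma comparison_M3 :
  t3 (comparison (M 3 t) (Mk k 3 T)) = shifted_mediant k (t1 c) (t1 t) (t2 c) (t2 t).
Proof.
  destruct ht as (h1 & h2 & h3).
  unfold c, comparison, shifted_mediant; cbn; field; lra.
Qed.

End OneStep.

Theorem lemma4p2 (k : R) (hk : 0 <= k) (t0 T0 : triple)
  (h0 : k_initial 0 t0) (hK : k_initial k T0)
  (s : list nat) (hs : reduced s) (i : nat) (hi : (i = 1 \/ i = 2 \/ i = 3)%nat) :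
  let tj := applyseq 0 s t0 in
  let Tj := applyseq k s T0 in
  let x := t1 tj in let y := t2 tj in let z := t3 tj in
  let l := t1 (comparison tj Tj) in
  let m := t2 (comparison tj Tj) in
  let n := t3 (comparison tj Tj) in
  let c' := comparison (M i tj) (Mk k i Tj) in
  let l' := t1 c' in let m' := t2 c' in let n' := t3 c' in
  (i = 1%nat -> m < n ->
     ((m <= l' <= n) <-> k <= y * (n - m)) /\ (k < y * (n - m) -> m < l' < n)) /\
  (i = 1%nat -> n < m ->
     ((n <= l' <= m) <-> k <= z * (m - n)) /\ (k < z * (m - n) -> n < l' < m)) /\
  (i = 2%nat -> l < n ->
     ((l <= m' <= n) <-> k <= x * (n - l)) /\ (k < x * (n - l) -> l < m' < n)) /\
  (i = 2%nat -> n < l ->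
     ((n <= m' <= l) <-> k <= z * (l - n)) /\ (k < z * (l - n) -> n < m' < l)) /\
  (i = 3%nat -> l < m ->
     ((l <= n' <= m) <-> k <= x * (m - l)) /\ (k < x * (m - l) -> l < n' < m)) /\
  (i = 3%nat -> m < l ->
     ((m <= n' <= l) <-> k <= y * (l - m)) /\ (k < y * (l - m) -> m < n' < l)).
Proof.
  intros tj Tj x y z l m n c' l' m' n'.
  assert (htj : Defs.positive tj) by (apply applyseq_positive; [lra | apply h0]).
  pose proof htj as (hx & hy & hz).
  subst l' m' n' c'.
  split; [| split; [| split; [| split; [| split]]]]; intros -> hlt;
    rewrite ?comparison_M1, ?comparison_M2, ?comparison_M3 by exact htj;
    first [ now apply shifted_mediant_between
          | rewrite shifted_mediant_comm; now apply shifted_mediant_between ].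
Qed.
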